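(* Let $(u_1,v_1)$ and $(u_2,v_2)$ be two decompositions of the $\omega$-word $uv^\omega$. If $(u_1,v_1)$ and $(u_2,v_2)$ have the same smallest period $y$, then they have the same shortest form $(x,y)$, with $u_1=xy^i$ and $u_2=xy^j$ for some $i,j\geq0$.
   Context: A decomposition of an $\omega$-word $w$ is a pair $(u,v)$ with $u\in\Sigma^*$, $v\in\Sigma^+$ and $w=uv^\omega$. Write $r\unlhd v$ if $r$ is a nonempty prefix of $v$, and $r\lhd v$ if moreover $r\neq v$. A smallest period of $(u,v)$ is a word $r$ with $r\unlhd v$, $r^\omega=v^\omega$, and $t^\omega\neq r^\omega$ for every $t\lhd r$. If $y$ is the smallest period of $(u,v)$, the shortest form of $(u,v)$ is the pair $(x,y)$ where $u=xy^i$, $v=y^j$ for some $i\geq0,j\geq1$ and $x$ is such that every $x'$ with $u=x'y^k$ ($0\le k\le i$) satisfies $x'=xy^{i-k}$ (i.e., $x$ is the shortest word with $u\in xy^*$). *)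

(* Finite words are [seq T] over an alphabet [T : eqType];
   an omega-word is represented as a function [nat -> option T]
   (the letter at each position; always [Some _] for u v^omega with v nonempty). *)
From mathcomp Require Import all_boot.
Set Implicit Arguments. Unset Strict Implicit. Unset Printing Implicit Defensive.

Section Words.
Variable T : eqType.

Definition wpow (y : seq T) (i : nat) : seq T := flatten (nseq i y).

Definition omega (u v : seq T) (n : nat) : option T :=
  if n < size u then onth u n else onth v ((n - size u) %% size v).

Definition oweq (w1 w2 : nat -> option T) : Prop := forall n, w1 n = w2 n.

Definition decomposition (w : nat -> option T) (u v : seq T) : Prop :=
  v != [::] /\ oweq w (omega u v).

Definition wprefix (r v : seq T) : Prop := r != [::] /\ prefix r v.
Definition sprefix (r v : seq T) : Prop := wprefix r v /\ r <> v.

Definition smallest_period (u v r : seq T) : Prop :=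
  wprefix r v /\ oweq (omega [::] r) (omega [::] v) /\
  forall t, sprefix t r -> ~ oweq (omega [::] t) (omega [::] r).

Definition shortest_form (u v x y : seq T) : Prop :=
  smallest_period u v y /\
  (exists i j, 1 <= j /\ u = x ++ wpow y i /\ v = wpow y j) /\
  (forall x' k, u = x' ++ wpow y k -> size x <= size x').

End Words.

(** A word [y] that is the smallest period of [v^omega] is primitive: by the
    gcd argument every period of [y^omega] is a multiple of [|y|].  Hence
    [v = y^j], and every [u] splits uniquely as [u = x y^i] with [x] not ending
    in [y]: if [x1 y^omega = x2 y^omega] with [|x1| <= |x2|], then
    [x2 = x1 z] where [z] shifts [y^omega] onto itself, so [z] is a power of
    [y], which must be empty.  Two decompositions of the same omega-word with
    the same period [y] have [u1 y^omega = u2 y^omega], so they share this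
    reduced prefix [x], which is also the shortest [x'] with [u] in [x' y^*]. *)
From mathcomp Require Import all_boot.
Set Implicit Arguments.
Unset Strict Implicit.
Unset Printing Implicit Defensive.

Section Periodic.
Variables (A : Type) (f : nat -> A).

Definition periodic (p : nat) := forall n, f (n + p) = f n.

Lemma periodicM p k : periodic p -> periodic (p * k).
Proof.
move=> fp; elim: k => [|k IHk] n; first by rewrite muln0 addn0.
by rewrite mulnS [p + _]addnC addnA fp IHk.
Qed.

Lemma periodicDl m d : periodic (m + d) -> periodic m -> periodic d.
Proof. by move=> fmd fm n; rewrite -fm -addnA [d + m]addnC fmd. Qed.

Lemma periodic_gcd p q : 0 < p -> periodic p -> periodic q ->
  periodic (gcdn p q).
Proof.
move=> p_gt0 fp fq; have [a b def_g _] := egcdnP q p_gt0.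
apply: (@periodicDl (b * q)); last by rewrite mulnC; exact: periodicM b fq.
by rewrite -def_g mulnC; exact: periodicM a fp.
Qed.

Lemma periodic_mod p n : periodic p -> f n = f (n %% p).
Proof.
by move=> fp; rewrite {1}(divn_eq n p) addnC mulnC (periodicM (n %/ p) fp).
Qed.

End Periodic.

Section OmegaWords.
Variable T : eqType.
Implicit Types (u v w x y z : seq T).

Lemma omega_nilE y n : omega [::] y n = onth y (n %% size y).
Proof. by rewrite /omega subn0. Qed.

Lemma omegaE x y n :
  omega x y n = if n < size x then onth x n else omega [::] y (n - size x).
Proof. by rewrite /omega subn0. Qed.

Lemma omega_addl x y n : omega x y (size x + n) = omega [::] y n.
Proof. by rewrite omegaE (ltnNge (size x + n)) leq_addr addKn. Qed.

Lemma omega_cat_addl x z y n : omega (x ++ z) y (size x + n) = omega z y n.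
Proof.
rewrite (omegaE (x ++ z)) (omegaE z) size_cat ltn_add2l onth_cat.
by rewrite (ltnNge (size x + n)) leq_addr addKn subnDl.
Qed.

Lemma periodic_omega_nil y : periodic (omega [::] y) (size y).
Proof. by move=> n; rewrite !omega_nilE modnDr. Qed.

Lemma eq_omega_period x v w :
  omega [::] v =1 omega [::] w -> omega x v =1 omega x w.
Proof. by move=> evw n; rewrite !(omegaE x) evw. Qed.

Lemma wpowSr y k : wpow y k.+1 = wpow y k ++ y.
Proof. by rewrite /wpow -addn1 nseqD flatten_cat /= cats0. Qed.

Lemma omega_cat_period x y n : omega (x ++ y) y n = omega x y n.
Proof.
rewrite [LHS]omegaE [RHS]omegaE size_cat onth_cat.
have [lt_nx | le_xn] := ltnP n (size x); first by rewrite ltn_addr.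
move: (n - size x) (subnKC le_xn) => m <-; rewrite ltn_add2l subnDl.
have [lt_my | le_ym] := ltnP m (size y); first by rewrite omega_nilE modn_small.
by rewrite -[in RHS](subnK le_ym) periodic_omega_nil.
Qed.

Lemma omega_cat_wpow x y k n : omega (x ++ wpow y k) y n = omega x y n.
Proof.
elim: k => [|k IHk]; first by rewrite cats0.
by rewrite wpowSr catA omega_cat_period.
Qed.

Lemma onth_take n x i : i < n -> onth (take n x) i = onth x i.
Proof. by move=> lt_in; rewrite !onthE map_take nth_take. Qed.

Lemma size_wpow y k : size (wpow y k) = k * size y.
Proof. by elim: k => // k IHk; rewrite wpowSr size_cat IHk mulSnr. Qed.

Lemma onth_wpow y k n :
  n < size (wpow y k) -> onth (wpow y k) n = omega [::] y n.
Proof.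
by move=> lt_n; rewrite -[RHS](omega_cat_wpow [::] y k) omegaE lt_n.
Qed.

Lemma wpow_from_omega y k z : size z = k * size y ->
  (forall n, n < size z -> onth z n = omega [::] y n) -> z = wpow y k.
Proof.
move=> size_z ez; apply: eq_from_onth_le => n.
rewrite size_wpow -size_z maxnn => lt_n.
by rewrite ez ?onth_wpow ?size_wpow -?size_z.
Qed.

(* For nonempty [y] this says that [y] is not a proper power. *)
Definition primitive y := forall d, periodic (omega [::] y) d -> size y %| d.

Lemma smallest_period_primitive u v y : smallest_period u v y -> primitive y.
Proof.
move=> [[y_nz _] [_ y_min]] d yd.
have y_gt0 : 0 < size y by rewrite lt0n size_eq0.
set g := gcdn (size y) d.
have yg : periodic (omega [::] y) g.
  exact: periodic_gcd y_gt0 (periodic_omega_nil y) yd.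
have g_gt0 : 0 < g by rewrite gcdn_gt0 y_gt0.
have le_gy : g <= size y by rewrite dvdn_leq ?dvdn_gcdl.
have [lt_gy | le_yg] := ltnP g (size y); last first.
  by apply/gcdn_idPl/eqP; rewrite eqn_leq le_gy.
case: (y_min (take g y)).
  split; [split|]; last by move/(congr1 size)/eqP; rewrite size_takel ?ltn_eqF.
  - by rewrite -size_eq0 size_takel // -lt0n.
  - exact: prefix_take.
move=> n; have lt_ng : n %% g < g by rewrite ltn_pmod.
rewrite omega_nilE size_takel // onth_take // (periodic_mod n yg) omega_nilE.
by rewrite [_ %% size y]modn_small ?(leq_trans lt_ng le_gy).
Qed.

Lemma omega_shift_wpow y z : primitive y ->
  omega [::] y =1 omega z y -> z = wpow y (size z %/ size y).
Proof.
move=> y_prim ez.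
have yz : periodic (omega [::] y) (size z).
  by move=> n; rewrite ez addnC omega_addl.
apply: wpow_from_omega => [|n lt_n]; first by rewrite divnK ?y_prim.
by rewrite ez omegaE lt_n.
Qed.

Lemma omega_period_wpow y v : primitive y ->
  omega [::] y =1 omega [::] v -> v = wpow y (size v %/ size y).
Proof.
move=> y_prim eyv; apply: omega_shift_wpow => // n.
by rewrite eyv -(omega_cat_period [::] v) (eq_omega_period v eyv).
Qed.

Lemma smallest_period_wpow u v y : smallest_period u v y ->
  exists2 j, 0 < j & v = wpow y j.
Proof.
move=> yv; have [[y_nz pre_yv] [eyv _]] := yv.
exists (size v %/ size y).
  by rewrite divn_gt0 ?size_prefix // lt0n size_eq0.
exact: omega_period_wpow (smallest_period_primitive yv) eyv.
Qed.

Section StripPowers.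
Variable y : seq T.
Hypotheses (y_nz : y != [::]) (y_prim : primitive y).

Lemma strip_wpow u : exists x i, u = x ++ wpow y i /\ ~~ suffix y x.
Proof.
have [n] := ubnP (size u); elim: n u => // n IHn u; rewrite ltnS => le_un.
have [/suffixP [u' def_u] | u_nsuf] := boolP (suffix y u); last first.
  by exists u, 0; rewrite cats0.
have [|x [i [def_u' x_nsuf]]] := IHn u'.
  move: le_un; rewrite def_u size_cat; apply: leq_trans.
  by rewrite -addn1 leq_add2l lt0n size_eq0.
by exists x, i.+1; rewrite def_u def_u' wpowSr catA.
Qed.

Lemma eq_omega_nosuffix x1 x2 : ~~ suffix y x1 -> ~~ suffix y x2 ->
  omega x1 y =1 omega x2 y -> x1 = x2.
Proof.
wlog le_x12 : x1 x2 / size x1 <= size x2 => [wlog_le|] n1 n2 e12.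
  have [le | lt] := leqP (size x1) (size x2); first exact: wlog_le.
  by apply: esym; apply: wlog_le (ltnW lt) n2 n1 _ => n; rewrite e12.
have /prefixP [z def_x2] : prefix x1 x2.
  rewrite prefixE; apply/eqP/eq_from_onth_le; rewrite size_takel // maxnn.
  move=> i lt_i; rewrite onth_take //.
  have := e12 i; rewrite (omegaE x1) (omegaE x2) lt_i.
  by rewrite (leq_trans lt_i le_x12).
have ez : omega [::] y =1 omega z y.
  by move=> n; rewrite -(omega_addl x1) e12 def_x2 omega_cat_addl.
move: n2; rewrite def_x2 (omega_shift_wpow y_prim ez).
case: (size z %/ size y) => [|k]; first by rewrite cats0.
by rewrite wpowSr catA suffix_suffix.
Qed.

Lemma nosuffix_shortest x i x' k : ~~ suffix y x ->
  x ++ wpow y i = x' ++ wpow y k -> size x <= size x'.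
Proof.
move=> x_nsuf e; have [x'' [m [def_x' x''_nsuf]]] := strip_wpow x'.
suff <- : x'' = x by rewrite def_x' size_cat leq_addr.
apply: eq_omega_nosuffix => // n.
rewrite -(omega_cat_wpow x'' y m) -def_x' -(omega_cat_wpow x' y k) -e.
exact: omega_cat_wpow.
Qed.

End StripPowers.

Lemma nosuffix_shortest_form u v x y i : smallest_period u v y ->
  u = x ++ wpow y i -> ~~ suffix y x -> shortest_form u v x y.
Proof.
move=> yv def_u x_nsuf; have [[y_nz _] _] := yv.
have [j j_gt0 def_v] := smallest_period_wpow yv.
split=> //; split; first by exists i, j.
move=> x' k; rewrite def_u; apply: nosuffix_shortest => //.
exact: smallest_period_primitive yv.
Qed.

End OmegaWords.

Theorem corollary1 (T : eqType) (u v u1 v1 u2 v2 y : seq T) :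
  v != [::] ->
  decomposition (omega u v) u1 v1 ->
  decomposition (omega u v) u2 v2 ->
  smallest_period u1 v1 y ->
  smallest_period u2 v2 y ->
  exists x : seq T,
    shortest_form u1 v1 x y /\ shortest_form u2 v2 x y /\
    exists i j : nat, u1 = x ++ wpow y i /\ u2 = x ++ wpow y j.
Proof.
move=> _ [_ e1] [_ e2] yv1 yv2.
have [[y_nz _] [eyv1 _]] := yv1; have [_ [eyv2 _]] := yv2.
have [x1 [i1 [def_u1 x1_nsuf]]] := strip_wpow y_nz u1.
have [x2 [i2 [def_u2 x2_nsuf]]] := strip_wpow y_nz u2.
have e12 : omega x1 y =1 omega x2 y.
  move=> n; rewrite -(omega_cat_wpow x1 y i1) -(omega_cat_wpow x2 y i2).
  rewrite -def_u1 -def_u2 (eq_omega_period u1 eyv1) (eq_omega_period u2 eyv2).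
  by rewrite -e1 -e2.
have y_prim := smallest_period_primitive yv1.
have ex12 := eq_omega_nosuffix y_prim x1_nsuf x2_nsuf e12; subst x2.
exists x1; split; [|split]; last by exists i1, i2.
- exact: nosuffix_shortest_form yv1 def_u1 x1_nsuf.
- exact: nosuffix_shortest_form yv2 def_u2 x2_nsuf.
Qed.
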